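(* Let $h>1$, $q=2^h$, and let $U$ be a nonempty subset of $\mathrm{GF}(q)^{\star}$. Then every non-degenerate conic of $PG(2,q^2)$ has at least one point in the set $\Psi'=\{P(x,y):\|x\|\in U\}\cup\{Y_\infty\}$, where $Y_\infty$ is the point at infinity of the vertical lines $X=c$; equivalently, the set of lines $\{X=c: c\in\mathrm{GF}(q^2),\ \|c\|\in U\}$ of $PG(2,q^2)$ is a conic blocking set.
   Context: $\|x\|=x^{q+1}$ for $x\in\mathrm{GF}(q^2)$. A conic blocking set of $PG(2,q^2)$ is a set of lines such that every non-degenerate conic meets at least one line of the set. *)

From HB Require Import structures.
From mathcomp Require Import all_boot all_order all_algebra all_field.
Set Implicit Arguments. Unset Strict Implicit. Unset Printing Implicit Defensive.
Import GRing.Theory.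
Local Open Scope ring_scope.

Definition conicQ (F : nzRingType) (a0 a1 a2 b0 b1 b2 : F) (x y z : F) : F :=
  a0 * x ^+ 2 + a1 * y ^+ 2 + a2 * z ^+ 2 + b0 * y * z + b1 * x * z + b2 * x * y.

Definition conicPolar (F : nzRingType) (a0 a1 a2 b0 b1 b2 : F)
  (x y z u v w : F) : F :=
  conicQ a0 a1 a2 b0 b1 b2 (x + u) (y + v) (z + w)
  - conicQ a0 a1 a2 b0 b1 b2 x y z - conicQ a0 a1 a2 b0 b1 b2 u v w.

(* The conic Q = 0 is non-degenerate (non-singular): it has no singular
   point, i.e. no nonzero vector v with Q(v) = 0 and B(v, .) = 0
   (equivalently, all partial derivatives of Q vanish at v). *)
Definition nondeg_conic (F : nzRingType) (a0 a1 a2 b0 b1 b2 : F) : Prop :=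
  forall x y z : F, (x, y, z) != (0, 0, 0) ->
    conicQ a0 a1 a2 b0 b1 b2 x y z = 0 ->
    exists u v w : F, conicPolar a0 a1 a2 b0 b1 b2 x y z u v w != 0.

(* Fix u in U and assume Y_inf is off the conic, i.e. a1 != 0.  On the
   vertical line X = x the conic reads a1 y^2 + C(x) y + D(x) = 0 with
   C(x) = b0 + b2 x; in characteristic 2 this quadratic has a root unless
   C(x) != 0 and the absolute trace of a1 D(x) / C(x)^2 equals 1
   (Artin-Schreier).  Suppose this happens for every x on the norm circle
   ||x|| = u.  A change of variable (none when b2 = 0, an inversion centred at
   the root x0 of C otherwise) turns the trace into v |-> Tr (eps v) + c on a
   norm circle; a polynomial of degree q vanishing on the q + 1 points of the
   circle forces eps = 0, and eps = 0 means that the nucleus (b0 : b1 : b2)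
   lies on the conic, which contradicts non-degeneracy. *)

From HB Require Import structures.
From mathcomp Require Import all_boot all_order all_algebra all_field.
From mathcomp Require Import ring zify.
Set Implicit Arguments. Unset Strict Implicit. Unset Printing Implicit Defensive.
Import GRing.Theory.
Local Open Scope ring_scope.

Lemma card_roots_lt (R : finIdomainType) (p : {poly R}) (S : {set R}) :
  p != 0 -> {in S, forall x, root p x} -> (#|S| < size p)%N.
Proof.
move=> p_neq0 S_roots; rewrite cardE; apply: max_poly_roots => //; last exact: enum_uniq.
by apply/allP => x; rewrite mem_enum; apply: S_roots.
Qed.

Lemma card_fibres (T U : finType) (f : T -> U) (A : {set T}) (B : {set U}) :
  {in A, forall x, f x \in B} ->
  #|A| = (\sum_(b in B) #|[set x in A | f x == b]|)%N.
Proof.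
move=> fAB; rewrite -sum1_card (partition_big f (mem B)) //=.
by apply: eq_bigr => b _; rewrite sum1dep_card.
Qed.

Lemma exp2nD (R : comNzRingType) k (x y : R) : 2%N \in [pchar R] ->
  (x + y) ^+ (2 ^ k) = x ^+ (2 ^ k) + y ^+ (2 ^ k).
Proof. by move=> char2; apply: exprDn_pchar; rewrite pnatX (pnatE _ (isT : prime 2)) char2. Qed.

Section CharacteristicTwo.
Variables (F : finFieldType) (n : nat).
Hypothesis cardF : #|F| = (2 ^ n)%N.
Hypothesis n_gt0 : (0 < n)%N.

Lemma char2 : 2%N \in [pchar F].
Proof. exact: card_finPcharP cardF _. Qed.

Definition trace (z : F) : F := \sum_(k < n) z ^+ (2 ^ k).

Lemma traceD x y : trace (x + y) = trace x + trace y.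
Proof. by rewrite -big_split; apply: eq_bigr => k _; rewrite exp2nD ?char2. Qed.

(* The trace is invariant under the Frobenius map, as z ^ (2 ^ n) = z. *)
Lemma trace_sqr z : trace (z ^+ 2) = trace z.
Proof.
rewrite /trace; under eq_bigr do rewrite -exprM -expnS.
apply: (@addIr _ z).
have := @big_ord_recl F 0 +%R n (fun k : 'I_n.+1 => z ^+ (2 ^ k)).
rewrite big_ord_recr /= -cardF (expf_card z) expn0 [z ^+ 1]expr1 => shift.
by rewrite addrC shift.
Qed.

Lemma trace01 z : trace z = 0 \/ trace z = 1.
Proof.
have trace_idem : trace z ^+ 2 = trace z.
  rewrite -[RHS]trace_sqr /trace.
  rewrite (big_morph (fun x : F => x ^+ 2) (fun x y => exp2nD 1 x y char2) (expr0n _ 2)).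
  by apply: eq_bigr => k _; rewrite exprAC.
have /eqP : trace z * (trace z - 1) = 0 by rewrite mulrBr mulr1 -expr2 trace_idem subrr.
by rewrite mulf_eq0 subr_eq0 => /orP[/eqP|/eqP]; [left|right].
Qed.

Lemma trace_AS y : trace (y ^+ 2 + y) = 0.
Proof. by rewrite traceD trace_sqr addrr_pchar2 ?char2. Qed.

Definition sqrtF (z : F) : F := z ^+ (2 ^ n.-1).

Lemma sqrtFK z : sqrtF z ^+ 2 = z.
Proof. by rewrite -exprM -expnSr prednK // -cardF expf_card. Qed.

Lemma trace_quadratic A B c s :
  trace (A * s ^+ 2 + B * s + c) = trace ((sqrtF A + B) * s) + trace c.
Proof.
by rewrite !traceD -[A in A * _]sqrtFK -exprMn trace_sqr -traceD mulrDl.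
Qed.

Lemma sqrtF_add_eq0 A B : sqrtF A + B = 0 -> A = B ^+ 2.
Proof. by move/eqP; rewrite addr_eq0 (oppr_pchar2 char2) => /eqP eA; rewrite -(sqrtFK A) eA. Qed.

Definition tracePoly : {poly F} := \sum_(k < n) 'X^(2 ^ k).

Lemma horner_tracePoly z : tracePoly.[z] = trace z.
Proof. by rewrite horner_sum; apply: eq_bigr => k _; rewrite hornerXn. Qed.

Lemma size_tracePoly : (size tracePoly <= (2 ^ n.-1).+1)%N.
Proof.
apply: (big_ind (fun p : {poly F} => size p <= (2 ^ n.-1).+1)%N) => [|p1 p2 p1S p2S|k _].
- by rewrite size_poly0.
- by apply: leq_trans (size_polyD _ _) _; rewrite geq_max p1S p2S.
- by rewrite size_polyXn ltnS leq_pexp2l // -ltnS prednK.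
Qed.

(* Its coefficient of X is 1, since 2 ^ k = 1 only for k = 0. *)
Lemma tracePoly_neq0 : tracePoly != 0.
Proof.
apply/eqP => trP0; have := congr1 (fun p : {poly F} => p`_1) trP0.
rewrite coef0 coef_sum (bigD1 (Ordinal n_gt0)) //= coefXn expn0 eqxx big1 ?addr0.
  by move/eqP; rewrite oner_eq0.
move=> k k_neq0; rewrite coefXn; case: eqP => // /esym/eqP.
by rewrite -[1%N](expn0 2) eqn_exp2l // => /eqP k0; move: k_neq0; rewrite -val_eqE /= k0.
Qed.

Lemma card_trace_kernel : (#|[set z : F | trace z == 0%R]| <= 2 ^ n.-1)%N.
Proof.
rewrite -ltnS; apply: leq_trans size_tracePoly.
apply: card_roots_lt tracePoly_neq0 _ => z; rewrite inE => /eqP trz.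
by rewrite /root horner_tracePoly trz.
Qed.

(* y ^ 2 + y = b has at most the two solutions y0 and y0 + 1. *)
Lemma card_AS_fibre b : (#|[set y : F | (y ^+ 2 + y == b)%R]| <= 2)%N.
Proof.
have [->|/set0Pn[y0]] := eqVneq [set y : F | y ^+ 2 + y == b] set0; first by rewrite cards0.
rewrite inE => /eqP y0b.
apply: (@leq_trans #|[set y0; y0 + 1]|); last by rewrite cards2 ltnS leq_b1.
apply/subset_leq_card/subsetP => y; rewrite !inE => /eqP yb.
have factor : (y - y0) * (y + y0 + 1) = (y ^+ 2 + y) - (y0 ^+ 2 + y0) by ring.
move: factor; rewrite yb y0b subrr => /eqP.
rewrite mulf_eq0 subr_eq0 => /orP[-> //|/eqP]; rewrite -addrA => /(canRL (addrK _)).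
by rewrite sub0r (oppr_pchar2 char2) => ->; rewrite eqxx orbT.
Qed.

(* Artin-Schreier: the elements of trace 0 are exactly the values of y ^ 2 + y;
   the image has at least 2 ^ n / 2 elements and lies in the trace kernel. *)
Lemma AS_surjective z : trace z = 0 -> exists y, y ^+ 2 + y = z.
Proof.
move=> trz; set AS := fun y : F => y ^+ 2 + y.
have im_sub : AS @: [set: F] \subset [set z : F | trace z == 0].
  by apply/subsetP => _ /imsetP[y _ ->]; rewrite inE trace_AS.
have im_card : (2 ^ n <= 2 * #|AS @: [set: F]|)%N.
  rewrite -cardF -cardsT (card_fibres (f := AS) (B := AS @: [set: F])); last first.
    by move=> y _; apply: imset_f.
  rewrite mulnC -sum_nat_const; apply: leq_sum => b _.
  by apply: leq_trans (card_AS_fibre b); apply/subset_leq_card/subsetP => y; rewrite !inE.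
have im_kernel : AS @: [set: F] = [set z : F | trace z == 0].
  apply/eqP; rewrite eqEcard im_sub -(leq_pmul2l (isT : (0 < 2)%N)).
  apply: leq_trans im_card; rewrite -{1}(prednK n_gt0) expnS leq_pmul2l //.
  exact: card_trace_kernel.
have : z \in [set z : F | trace z == 0] by rewrite inE trz.
by rewrite -im_kernel => /imsetP[y _ ->]; exists y.
Qed.

Lemma quadratic_root a C D : a != 0 ->
  C = 0 \/ trace (a * D / C ^+ 2) = 0 -> exists y, a * y ^+ 2 + C * y + D = 0.
Proof.
move=> a_neq0 solvable; have [C_eq0|C_neq0] := eqVneq C 0.
  exists (sqrtF (D / a)).
  by rewrite sqrtFK C_eq0 mul0r addr0 mulrC divfK // (addrr_pchar2 char2).
have [z zAS] : exists z, z ^+ 2 + z = a * D / C ^+ 2.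
  by apply: AS_surjective; case: solvable => // /eqP; rewrite (negbTE C_neq0).
exists (z * C / a); rewrite -[RHS](addrr_pchar2 char2 D); congr (_ + _).
have -> : D = (z ^+ 2 + z) * C ^+ 2 / a by rewrite zAS; field; rewrite a_neq0 C_neq0.
by field.
Qed.
End CharacteristicTwo.

Section NormCircles.
Variables (F : finFieldType) (q : nat).
Hypothesis cardF : #|F| = (q ^ 2)%N.
Hypothesis q_gt1 : (1 < q)%N.

Lemma frobenius_involutive (x : F) : x ^+ q ^+ q = x.
Proof. by rewrite -exprM mulnn -cardF expf_card. Qed.

(* The norm x ^ (q + 1) of GF(q^2) over GF(q) lands in GF(q) = {r | r ^ q = r}. *)
Lemma norm_fixed (x : F) : (x ^+ q.+1) ^+ q = x ^+ q.+1.
Proof. by rewrite -exprM mulSn exprD exprM frobenius_involutive -exprSr. Qed.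

(* GF(q)^* has at most q - 1 elements: they are roots of X ^ (q - 1) - 1. *)
Lemma card_subfield_units : (#|[set r : F | (r != 0%R) && (r ^+ q == r)]| <= q.-1)%N.
Proof.
have q_gt0 : (0 < q)%N by apply: ltnW.
have sizeP : size ('X^(q.-1) - 1%:P : {poly F}) = q.
  by rewrite size_XnsubC ?prednK // -ltnS prednK.
rewrite -ltnS prednK // -[in X in (_ < X)%N]sizeP.
apply: card_roots_lt; first by rewrite -size_poly_eq0 sizeP -lt0n.
move=> r; rewrite inE => /andP[r_neq0 /eqP r_fixed].
rewrite /root !hornerE subr_eq0; apply/eqP/(mulIf r_neq0).
by rewrite mul1r -exprSr prednK.
Qed.

(* Each norm circle {v | v ^ (q + 1) = r} with r in GF(q)^* has at least q + 1
   points: q^2 - 1 nonzero elements are spread over at most q - 1 circles of at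
   most q + 1 points each. *)
Lemma card_norm_circle r : r != 0 -> r ^+ q = r ->
  (q.+1 <= #|[set v : F | v ^+ q.+1 == r]|)%N.
Proof.
move=> r_neq0 r_fixed.
pose R := [set s : F | (s != 0) && (s ^+ q == s)].
pose nonzero := [set~ (0 : F)].
have norm_R : {in nonzero, forall x, x ^+ q.+1 \in R}.
  by move=> x; rewrite in_setC1 inE => x_neq0; rewrite expf_neq0 //= norm_fixed.
have circle_le s : (#|[set x in nonzero | x ^+ q.+1 == s]| <= q.+1)%N.
  rewrite -ltnS -(size_XnsubC s (ltn0Sn q)); apply: card_roots_lt.
    by rewrite -size_poly_eq0 size_XnsubC.
  by move=> x; rewrite !inE => /andP[_ /eqP xs]; rewrite /root !hornerE xs subrr.
have rR : r \in R by rewrite inE r_neq0 r_fixed eqxx.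
have split_R : ((q ^ 2).-1 <= #|[set x in nonzero | x ^+ q.+1 == r]| + #|R|.-1 * q.+1)%N.
  rewrite -cardF -(cardsC1 (0 : F)) (card_fibres norm_R) (big_setD1 r rR) /= leq_add2l.
  rewrite (cardsD1 r R) rR /= -sum_nat_const; apply: leq_sum => s _; exact: circle_le.
have R_gt0 : (0 < #|R|)%N by rewrite card_gt0; apply/set0Pn; exists r.
have := card_subfield_units; rewrite -/R => R_le.
have : (q.+1 <= #|[set x in nonzero | x ^+ q.+1 == r]|)%N by nia.
by move/leq_trans; apply; apply/subset_leq_card/subsetP => x; rewrite !inE => /andP[].
Qed.

Lemma norm_surjective r : r != 0 -> r ^+ q = r -> exists v : F, v ^+ q.+1 = r.
Proof.
move=> r_neq0 r_fixed; have := card_norm_circle r_neq0 r_fixed.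
by move/(leq_trans (ltn0Sn _)); rewrite card_gt0 => /set0Pn[v]; rewrite inE => /eqP; exists v.
Qed.
End NormCircles.

Section ConicIdentities.
Variables (R : comNzRingType) (a0 a1 a2 b0 b1 b2 : R).
Local Notation Q := (conicQ a0 a1 a2 b0 b1 b2).

Lemma conicQ_Yinf : Q 0 1 0 = a1.
Proof. by rewrite /conicQ; ring. Qed.

Lemma conicQ_affine x y :
  Q x y 1 = a1 * y ^+ 2 + (b0 + b2 * x) * y + (a0 * x ^+ 2 + b1 * x + a2).
Proof. by rewrite /conicQ; ring. Qed.

(* The polar form at the nucleus N = (b0 : b1 : b2) is divisible by 2 ... *)
Lemma conicPolar_nucleus u v w : conicPolar a0 a1 a2 b0 b1 b2 b0 b1 b2 u v w =
  2%:R * (a0 * b0 * u + a1 * b1 * v + a2 * b2 * w + b0 * b1 * w + b0 * b2 * v + b1 * b2 * u).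
Proof. by rewrite /conicPolar /conicQ; ring. Qed.

(* ... so in characteristic 2, N is singular as soon as it lies on the conic:
   the nucleus of a non-degenerate conic is off the conic. *)
Lemma nucleus_off_conic : 2%N \in [pchar R] -> nondeg_conic a0 a1 a2 b0 b1 b2 ->
  (b0, b1, b2) != (0, 0, 0) -> Q b0 b1 b2 != 0.
Proof.
move=> char2 nondeg N_neq0; apply/eqP => QN.
have [u [v [w]]] := nondeg _ _ _ N_neq0 QN.
by rewrite conicPolar_nucleus (pcharf0 char2) mul0r eqxx.
Qed.

Lemma conicQ_nucleus x0 : b0 + b2 * x0 = 0 ->
  Q b0 b1 b2 = b2 ^+ 2 * (a0 * x0 ^+ 2 + b1 * x0 + a2) + a1 * b1 ^+ 2
               - 2%:R * (2%:R * (b1 * b2 ^+ 2 * x0)).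
Proof. by move/eqP; rewrite addr_eq0 => /eqP b0E; rewrite /conicQ b0E; ring. Qed.

Lemma conicQ_nucleus_b2_eq0 : b2 = 0 -> Q b0 b1 b2 = a0 * b0 ^+ 2 + a1 * b1 ^+ 2.
Proof. by move->; rewrite /conicQ; ring. Qed.
End ConicIdentities.

(* Substituting x = x0 + 1/s, where b0 + b2 x0 = 0, turns the argument
   a1 D(x) / C(x)^2 of the trace into a quadratic polynomial in s (up to a
   multiple of 2, which vanishes in characteristic 2). *)
Lemma vertical_quadratic_shift (F : fieldType) (a0 a1 a2 b0 b1 b2 x0 s : F) :
  b2 != 0 -> s != 0 -> b0 + b2 * x0 = 0 ->
  a1 * (a0 * (x0 + s^-1) ^+ 2 + b1 * (x0 + s^-1) + a2) / (b0 + b2 * (x0 + s^-1)) ^+ 2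
  = a1 / b2 ^+ 2 * (a0 * x0 ^+ 2 + b1 * x0 + a2) * s ^+ 2 + a1 / b2 ^+ 2 * b1 * s
    + a1 / b2 ^+ 2 * a0 + 2%:R * (a1 / b2 ^+ 2 * a0 * x0 * s).
Proof.
move=> b2_neq0 s_neq0 /eqP; rewrite addr_eq0 => /eqP ->.
by field; rewrite s_neq0 b2_neq0.
Qed.

(* The algebra behind inversion through norm circles: with m = x0 x0' - u,
   s = v - x0' / m and S = u / m^2 / v - x0 / m, one has
   (x0' + 1/S) (x0 + 1/s) = u.  Applied with x0' = x0 ^ q and S = s ^ q,
   it maps the circle of norm u / m^2 into the circle of norm u. *)
Lemma inversion_identity (F : fieldType) (x0 x0' u v m : F) :
  m = x0 * x0' - u -> m != 0 -> v != 0 ->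
  v - x0' / m != 0 -> u / m ^+ 2 / v - x0 / m != 0 ->
  (x0' + (u / m ^+ 2 / v - x0 / m)^-1) * (x0 + (v - x0' / m)^-1) = u.
Proof.
move=> mE m_neq0 v_neq0 s_neq0 S_neq0.
set s := v - x0' / m in s_neq0 *; set S := u / m ^+ 2 / v - x0 / m in S_neq0 *.
have key : (x0' * S + 1) * (x0 * s + 1) = u * (S * s).
  by rewrite /S /s; move: m_neq0; rewrite mE => m_neq0; field; rewrite v_neq0 m_neq0.
have -> : (x0' + S^-1) * (x0 + s^-1) = (x0' * S + 1) * (x0 * s + 1) / (S * s).
  by field; rewrite S_neq0 s_neq0.
by rewrite key mulfK // mulf_neq0.
Qed.

Section EvenOrderPlane.
Variables (F : finFieldType) (h : nat).
Hypothesis cardF : #|F| = ((2 ^ h) ^ 2)%N.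
Hypothesis h_gt0 : (0 < h)%N.

Local Notation q := (2 ^ h)%N.
Local Notation p := (2 ^ h.-1)%N.
Local Notation Tr := (trace (h + h)).

Let q_gt1 : (1 < q)%N.
Proof. by rewrite -{1}(expn0 2) ltn_exp2l. Qed.

Let cardF2 : #|F| = (2 ^ (h + h))%N.
Proof. by rewrite cardF -expnM muln2 addnn. Qed.

Let hh_gt0 : (0 < h + h)%N.
Proof. by rewrite addn_gt0 h_gt0. Qed.

Let q_half : q = (p + p)%N.
Proof. by rewrite addnn -mul2n -expnS prednK. Qed.

(* On the circle v ^ (q + 1) = r the conjugate v ^ q equals r / v, so with
   q = 2 p the product v ^ p * Tr (eps v) is a polynomial of degree q in v. *)
Lemma trace_on_circle (eps r v : F) : v ^+ q.+1 = r ->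
  v ^+ p * Tr (eps * v) = \sum_(j < h) (eps ^+ (2 ^ j) * v ^+ (p + 2 ^ j)
                            + (eps ^+ q * r) ^+ (2 ^ j) * v ^+ (p - 2 ^ j)).
Proof.
move=> Nv; rewrite /trace big_split_ord /= mulrDr !mulr_sumr -big_split /=.
apply: eq_bigr => j _; congr (_ + _); first by rewrite exprMn exprD mulrCA.
have j_le : (2 ^ j <= p)%N by rewrite leq_pexp2l // -ltnS prednK.
rewrite expnD exprM exprMn [RHS]mulrC -{1}(subnK j_le) exprD -mulrA; congr (_ * _).
by rewrite -[v ^+ (2 ^ j) * _]exprMn mulrCA -exprS Nv.
Qed.

(* The polynomial whose roots contain the circle if Tr (eps v) = c on it. *)
Definition circle_poly (eps r c : F) : {poly F} :=
  \sum_(j < h) (eps ^+ (2 ^ j) *: 'X^(p + 2 ^ j) + (eps ^+ q * r) ^+ (2 ^ j) *: 'X^(p - 2 ^ j))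
  - c *: 'X^p.

Lemma size_circle_poly eps r c : (size (circle_poly eps r c) <= q.+1)%N.
Proof.
have j_le (j : 'I_h) : (2 ^ j <= p)%N by rewrite leq_pexp2l // -ltnS prednK.
apply: leq_trans (size_polyD _ _) _; rewrite geq_max size_polyN.
apply/andP; split; last first.
  by apply: leq_trans (size_scale_leq _ _) _; rewrite size_polyXn ltnS q_half leq_addr.
apply: (big_ind (fun P : {poly F} => size P <= q.+1)%N) => [|P1 P2 P1S P2S|j _].
- by rewrite size_poly0.
- by apply: leq_trans (size_polyD _ _) _; rewrite geq_max P1S P2S.
apply: leq_trans (size_polyD _ _) _; rewrite geq_max.
apply/andP; split; apply: leq_trans (size_scale_leq _ _) _; rewrite size_polyXn ltnS q_half.
  by rewrite leq_add2l.
by apply: leq_trans (leq_subr _ _) (leq_addr _ _).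
Qed.

(* Only the term j = 0 contributes to the coefficient of X ^ (p + 1). *)
Lemma coef_circle_poly eps r c : (circle_poly eps r c)`_p.+1 = eps.
Proof.
have lt_p (k : nat) : (p.+1 == p - k)%N = false by rewrite gtn_eqF // ltnS leq_subr.
rewrite coefB coef_sum coefZ coefXn (gtn_eqF (ltnSn p)) mulr0 subr0.
rewrite (bigD1 (Ordinal h_gt0)) //= coefD !coefZ !coefXn lt_p mulr0 addr0.
rewrite expn0 addn1 eqxx mulr1 expr1 big1 ?addr0 // => j j_neq0.
rewrite coefD !coefZ !coefXn lt_p mulr0 addr0 -[p.+1]addn1 eqn_add2l.
rewrite -[1%N](expn0 2) eqn_exp2l // eq_sym.
suff /negbTE -> : (j != 0 :> nat) by rewrite mulr0.
by apply: contra j_neq0 => /eqP j0; rewrite -val_eqE /= j0.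
Qed.

(* Key fact: a linear trace form v |-> Tr (eps v) that is constant on a norm
   circle must vanish, since otherwise circle_poly would be a nonzero
   polynomial of size <= q + 1 with q + 1 roots. *)
Lemma trace_constant_on_circle (eps r c : F) : r != 0 -> r ^+ q = r ->
  (forall v, v ^+ q.+1 = r -> Tr (eps * v) = c) -> eps = 0.
Proof.
move=> r_neq0 r_fixed trace_const.
have roots v : v \in [set v : F | v ^+ q.+1 == r] -> root (circle_poly eps r c) v.
  rewrite inE => /eqP Nv; apply/eqP.
  rewrite /circle_poly !hornerE horner_sum.
  under eq_bigr do rewrite !hornerE.
  by rewrite -(trace_on_circle eps Nv) trace_const // mulrC subrr.
have circle_big := card_norm_circle cardF q_gt1 r_neq0 r_fixed.
have /eqP P0 : circle_poly eps r c == 0.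
  apply: contraT => P_neq0; have := card_roots_lt P_neq0 roots.
  by rewrite ltnNge (leq_trans (size_circle_poly _ _ _) circle_big).
by rewrite -(coef_circle_poly eps r c) P0 coef0.
Qed.

Lemma frobeniusB (a b : F) : (a - b) ^+ q = a ^+ q - b ^+ q.
Proof. by rewrite !(GRing.subr_pchar2 (char2 cardF2)) exp2nD ?(char2 cardF2). Qed.

Lemma circle_inversion (x0 u v : F) : u != 0 -> u ^+ q = u -> x0 ^+ q.+1 != u ->
  v ^+ q.+1 = u / (x0 ^+ q.+1 - u) ^+ 2 ->
  v - x0 ^+ q / (x0 ^+ q.+1 - u) != 0 /\
  (x0 + (v - x0 ^+ q / (x0 ^+ q.+1 - u))^-1) ^+ q.+1 = u.
Proof.
move=> u_neq0 u_fixed N0_neq Nv.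
set m := x0 ^+ q.+1 - u in Nv *.
have m_neq0 : m != 0 by rewrite subr_eq0.
have m_fixed : m ^+ q = m by rewrite frobeniusB norm_fixed ?u_fixed.
have v_neq0 : v != 0.
  by apply: contra_eq_neq Nv => ->; rewrite expr0n /= eq_sym !mulf_neq0 ?invr_eq0 ?expf_neq0.
have vq : v ^+ q = u / m ^+ 2 / v by rewrite -Nv exprSr mulfK.
have s_neq0 : v - x0 ^+ q / m != 0.
  rewrite subr_eq0; apply: contra_neq N0_neq => vE.
  apply: (mulIf (invr_neq0 (expf_neq0 2 m_neq0))); rewrite -Nv vE expr_div_n.
  by rewrite [m ^+ q.+1]exprSr [(x0 ^+ q) ^+ q.+1]exprSr m_fixed frobenius_involutive // -exprS.
have sq : (v - x0 ^+ q / m) ^+ q = u / m ^+ 2 / v - x0 / m.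
  by rewrite frobeniusB vq expr_div_n frobenius_involutive // m_fixed.
split => //; rewrite exprSr exp2nD ?(char2 cardF2) // exprVn sq.
apply: inversion_identity; rewrite -?sq ?expf_neq0 //.
by rewrite /m exprS.
Qed.

Section Conic.
Variables a0 a1 a2 b0 b1 b2 : F.
Hypothesis nondeg : nondeg_conic a0 a1 a2 b0 b1 b2.
Hypothesis a1_neq0 : a1 != 0.

(* The circle of norm u avoids the conic along vertical lines: on each line
   X = x with ||x|| = u, the quadratic a1 y^2 + C(x) y + D(x) of
   conicQ_affine has C(x) != 0 and trace of a1 D(x) / C(x)^2 equal to 1. *)
Definition avoids_conic (u : F) : Prop :=
  forall x, x ^+ q.+1 = u -> b0 + b2 * x != 0 /\
    Tr (a1 * (a0 * x ^+ 2 + b1 * x + a2) / (b0 + b2 * x) ^+ 2) = 1.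

Lemma avoids_conicP u :
  (forall x y, x ^+ q.+1 = u -> conicQ a0 a1 a2 b0 b1 b2 x y 1 != 0) -> avoids_conic u.
Proof.
move=> no_point x Nx; set T := a1 * _ / _.
suff solvable : ~ (b0 + b2 * x = 0 \/ Tr T = 0).
  split; first by apply/eqP => C0; apply: solvable; left.
  by case: (trace01 cardF2 T) => // tr0; case: solvable; right.
case/(quadratic_root cardF2 hh_gt0 a1_neq0) => y Qy.
by have /eqP := no_point x y Nx; rewrite conicQ_affine.
Qed.

(* If b2 = 0, then C = b0 is constant and the trace is Tr (eps x) + c on the
   circle; its constancy forces eps = 0, which puts the nucleus (b0 : b1 : 0)
   on the conic. *)
Lemma avoids_conic_b2_eq0 u : u != 0 -> u ^+ q = u -> b2 = 0 -> ~ avoids_conic u.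
Proof.
move=> u_neq0 u_fixed b2_eq0 avoid; have char2F := char2 cardF2.
have [x1 Nx1] := norm_surjective cardF q_gt1 u_neq0 u_fixed.
have b0_neq0 : b0 != 0 by have [] := avoid x1 Nx1; rewrite b2_eq0 mul0r addr0.
pose k := a1 / b0 ^+ 2.
have eps0 : sqrtF (h + h) (k * a0) + k * b1 = 0.
  apply: (trace_constant_on_circle (c := 1 - Tr (k * a2)) u_neq0 u_fixed) => v Nv.
  have [_] := avoid v Nv; rewrite b2_eq0 mul0r addr0.
  have -> : a1 * (a0 * v ^+ 2 + b1 * v + a2) / b0 ^+ 2 = k * a0 * v ^+ 2 + k * b1 * v + k * a2.
    by rewrite /k; field.
  by rewrite (trace_quadratic cardF2 hh_gt0) => <-; rewrite addrK.
have ka0 := sqrtF_add_eq0 cardF2 hh_gt0 eps0.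
have N_neq0 : (b0, b1, b2) != (0, 0, 0).
  by apply/eqP => -[b00 _ _]; move: b0_neq0; rewrite b00 eqxx.
apply: (negP (nucleus_off_conic char2F nondeg N_neq0)); apply/eqP.
have -> : conicQ a0 a1 a2 b0 b1 b2 b0 b1 b2 = (b0 ^+ 2) ^+ 2 / a1 * (k * a0 + (k * b1) ^+ 2).
  by rewrite conicQ_nucleus_b2_eq0 // /k; field; rewrite b0_neq0 a1_neq0.
by rewrite ka0 (addrr_pchar2 char2F) mulr0.
Qed.

(* Otherwise the line C(X) = 0 is X = x0 with x0 off the circle; the
   inversion x = x0 + 1/s, s = v - x0 ^ q / m, parametrizes the circle by
   another circle, on which the trace becomes Tr (eps v) + c.  Its
   constancy forces eps = 0, which puts the nucleus (b0 : b1 : b2) on the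
   conic. *)
Lemma avoids_conic_b2_neq0 u : u != 0 -> u ^+ q = u -> b2 != 0 -> ~ avoids_conic u.
Proof.
move=> u_neq0 u_fixed b2_neq0 avoid; have char2F := char2 cardF2.
pose x0 := b0 / b2.
have Cx0 : b0 + b2 * x0 = 0 by rewrite /x0 mulrC divfK // (addrr_pchar2 char2F).
have N0_neq : x0 ^+ q.+1 != u by apply/eqP => N0; have [] := avoid x0 N0; rewrite Cx0 eqxx.
pose m := x0 ^+ q.+1 - u.
have m_neq0 : m != 0 by rewrite subr_eq0.
have r_neq0 : u / m ^+ 2 != 0 by rewrite mulf_neq0 ?invr_eq0 ?expf_neq0.
have r_fixed : (u / m ^+ 2) ^+ q = u / m ^+ 2.
  by rewrite expr_div_n u_fixed -exprM mulnC exprM frobeniusB norm_fixed ?u_fixed.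
pose k := a1 / b2 ^+ 2; pose D0 := a0 * x0 ^+ 2 + b1 * x0 + a2.
pose eps := sqrtF (h + h) (k * D0) + k * b1.
have eps0 : eps = 0.
  pose c := 1 - Tr (k * a0) - Tr (- (eps * (x0 ^+ q / m))).
  apply: (trace_constant_on_circle (c := c) r_neq0 r_fixed) => v Nv.
  have [s_neq0 Nx] := circle_inversion u_neq0 u_fixed N0_neq Nv.
  have [_] := avoid _ Nx; rewrite vertical_quadratic_shift // (pcharf0 char2F) mul0r addr0.
  rewrite (trace_quadratic cardF2 hh_gt0) -/eps mulrBr (traceD cardF2) => tr1.
  by rewrite /c /m /k -tr1 !addrK.
have kD0 := sqrtF_add_eq0 cardF2 hh_gt0 eps0.
have N_neq0 : (b0, b1, b2) != (0, 0, 0).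
  by apply/eqP => -[_ _ b20]; move: b2_neq0; rewrite b20 eqxx.
apply: (negP (nucleus_off_conic char2F nondeg N_neq0)); apply/eqP.
have -> : conicQ a0 a1 a2 b0 b1 b2 b0 b1 b2 =
          (b2 ^+ 2) ^+ 2 / a1 * (k * D0 + (k * b1) ^+ 2) - 2%:R * (2%:R * (b1 * b2 ^+ 2 * x0)).
  by rewrite (conicQ_nucleus _ _ _ _ Cx0) /k /D0; field; rewrite b2_neq0 a1_neq0.
by rewrite kD0 (addrr_pchar2 char2F) mulr0 (pcharf0 char2F) mul0r subr0.
Qed.

Lemma circle_meets_conic u : u != 0 -> u ^+ q = u ->
  exists x y, x ^+ q.+1 = u /\ conicQ a0 a1 a2 b0 b1 b2 x y 1 = 0.
Proof.
move=> u_neq0 u_fixed.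
have [/existsP[x /existsP[y /andP[/eqP Nx /eqP Qxy]]]|no_point] :=
  boolP [exists x : F, exists y : F, (x ^+ q.+1 == u) && (conicQ a0 a1 a2 b0 b1 b2 x y 1 == 0)].
  by exists x, y.
have avoid : avoids_conic u.
  apply: avoids_conicP => x y Nx; apply: contraNneq no_point => Qxy.
  by apply/existsP; exists x; apply/existsP; exists y; rewrite Nx Qxy !eqxx.
have [b2_eq0|b2_neq0] := eqVneq b2 0.
  by case: (avoids_conic_b2_eq0 u_neq0 u_fixed b2_eq0 avoid).
by case: (avoids_conic_b2_neq0 u_neq0 u_fixed b2_neq0 avoid).
Qed.
End Conic.
End EvenOrderPlane.

Theorem mainTheorem5 (h : nat) (F : finFieldType) (U : {set F}) :
  (1 < h)%N ->
  #|F| = ((2 ^ h) ^ 2)%N ->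
  U != set0 ->
  (forall u, u \in U -> u != 0 /\ u ^+ (2 ^ h) = u) ->
  forall a0 a1 a2 b0 b1 b2 : F,
    nondeg_conic a0 a1 a2 b0 b1 b2 ->
    conicQ a0 a1 a2 b0 b1 b2 0 1 0 = 0 \/
    exists x y : F, x ^+ (2 ^ h + 1) \in U /\ conicQ a0 a1 a2 b0 b1 b2 x y 1 = 0.
Proof.
move=> h_gt1 cardF /set0Pn[u u_in_U] U_sub a0 a1 a2 b0 b1 b2 nondeg.
have [a1_eq0|a1_neq0] := eqVneq a1 0; first by left; rewrite conicQ_Yinf.
right; have [u_neq0 u_fixed] := U_sub u u_in_U.
have [x [y [Nx Qxy]]] := circle_meets_conic cardF (ltnW h_gt1) nondeg a1_neq0 u_neq0 u_fixed.
by exists x, y; rewrite addn1 Nx.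
Qed.
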